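(* Let $p$ be an odd prime, $D=\mathbb{Z}_{(p)}$, and $A=D\oplus D\mathbf{i}\oplus D\mathbf{j}\oplus D\mathbf{k}$ with $\mathbf{i}^2=\mathbf{j}^2=-1$, $\mathbf{i}\mathbf{j}=\mathbf{k}=-\mathbf{j}\mathbf{i}$. Then $\textnormal{Int}_{\mathbb{Q}}(A)=\textnormal{Int}_{\mathbb{Q}}(M_2(D))$, but $A\not\cong M_2(D)$.
   Context: $\textnormal{Int}_{\mathbb{Q}}(A)=\{f\in\mathbb{Q}[X]\mid f(A)\subseteq A\}$ with evaluation in $\mathbb{Q}\otimes_D A$; similarly for $M_2(D)$, the $2\times 2$ matrices over $D$. *)

From HB Require Import structures.
From mathcomp Require Import all_boot all_order all_algebra.
Set Implicit Arguments. Unset Strict Implicit. Unset Printing Implicit Defensive.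
Import Order.TTheory GRing.Theory Num.Theory.
Local Open Scope ring_scope.

Definition inZloc (p : nat) (x : rat) : bool := ~~ (p%:Z %| denq x)%Z.

(* Q (x)_D A = Hamilton quaternions over Q: a + b i + c j + d k. *)
Record quat := Quat { qa : rat; qb : rat; qc : rat; qd : rat }.

Definition qadd (x y : quat) : quat :=
  Quat (qa x + qa y) (qb x + qb y) (qc x + qc y) (qd x + qd y).

(* i^2 = j^2 = -1, ij = k = -ji (hence k^2 = -1, jk = i, ki = j). *)
Definition qmul (x y : quat) : quat :=
  Quat (qa x * qa y - qb x * qb y - qc x * qc y - qd x * qd y)
       (qa x * qb y + qb x * qa y + qc x * qd y - qd x * qc y)
       (qa x * qc y - qb x * qd y + qc x * qa y + qd x * qb y)
       (qa x * qd y + qb x * qc y - qc x * qb y + qd x * qa y).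

Definition qconst (c : rat) : quat := Quat c 0 0 0.
Definition qzero : quat := qconst 0.
Definition qone : quat := qconst 1.

Definition qeval (f : {poly rat}) (q : quat) : quat :=
  foldr (fun c acc => qadd (qmul acc q) (qconst c)) qzero (polyseq f).

Definition inA (p : nat) (q : quat) : bool :=
  [&& inZloc p (qa q), inZloc p (qb q), inZloc p (qc q) & inZloc p (qd q)].

Definition inM2D (p : nat) (M : 'M[rat]_2) : bool :=
  [forall i, forall j, inZloc p (M i j)].

Definition IntQ_A (p : nat) (f : {poly rat}) : Prop :=
  forall q, inA p q -> inA p (qeval f q).

Definition IntQ_M2D (p : nat) (f : {poly rat}) : Prop :=
  forall M : 'M[rat]_2, inM2D p M -> inM2D p (horner_mx M f).

(* A ring isomorphism A -> M_2(D) (a ring iso between D-algebras is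
   automatically D-linear since D is a localization of Z). *)
Definition A_M2D_ring_iso (p : nat) (phi : quat -> 'M[rat]_2) : Prop :=
  (forall x, inA p x -> inM2D p (phi x)) /\
      (forall x y, inA p x -> inA p y -> phi x = phi y -> x = y) /\
      (forall M, inM2D p M -> exists2 x, inA p x & phi x = M) /\
      (forall x y, inA p x -> inA p y -> phi (qadd x y) = phi x + phi y) /\
      (forall x y, inA p x -> inA p y -> phi (qmul x y) = phi x * phi y) /\
  phi qone = 1.

(* Write an element of A or of M_2(D) as a + v with a central and v ^ 2 = s central.
   Then f (a + v) = P + Q v, where P and Q depend only on f, a and s, so f (a + v) is
   integral iff P is in D and Q g is in D, g being a coordinate of v of least p-adic
   valuation; writing s = g ^ 2 s0, both rings impose these conditions on triples
   (a, g, s0) of D. In M_2(D) every triple occurs ([[a, g], [g s0, a]]). In A one has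
   s0 = -(u1 ^ 2 + u2 ^ 2 + u3 ^ 2) with u1 a unit, and such sums approximate every
   element of D p-adically (pigeonhole modulo p, then Hensel lifting); since P and Q are
   p-adically continuous in s, the conditions agree. Finally A is not isomorphic to
   M_2(D): M_2(D) has zero divisors, A has none. *)

From HB Require Import structures.
From mathcomp Require Import all_boot all_order all_algebra.
From mathcomp Require Import zify ring lra.
Set Implicit Arguments. Unset Strict Implicit. Unset Printing Implicit Defensive.
Import Order.TTheory GRing.Theory Num.Theory.

Section SumsOfSquaresModPrime.
Variable p : nat.
Hypothesis p_pr : prime p.
Hypothesis p_odd : odd p.

Lemma sqr_mod_inj k x y : coprime p k -> x <= p./2 -> y <= p./2 ->
  k * x ^ 2 = k * y ^ 2 %[mod p] -> x = y.
Proof.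
move=> cpk; wlog yx : x y / y <= x => [wlog_yx xh yh exy|xh yh].
  by case: (leqP y x) => [yx|/ltnW xy]; [exact: wlog_yx | exact/esym/wlog_yx].
move/eqP; rewrite eqn_mod_dvd ?leq_mul ?leq_exp2r // -mulnBr Gauss_dvdr //.
rewrite subn_sqr Euclid_dvdM // => /orP[] dvd_p.
  by case: (posnP (x - y)) => [|pos]; [lia | move: dvd_p; rewrite gtnNdvd //; lia].
by case: (posnP (x + y)) => [|pos]; [lia | move: dvd_p; rewrite gtnNdvd //; lia].
Qed.

(* Pigeonhole: the h + 1 classes of x ^ 2 and of t - y ^ 2 (x, y <= h := p./2) cannot be
   disjoint in Z/p. *)
Lemma sum_two_sqr_mod t : exists x y, x ^ 2 + y ^ 2 = t %[mod p].
Proof.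
have p_gt0 := prime_gt0 p_pr; set h := p./2.
have cp1 : coprime p 1 by rewrite coprimen1.
have cpN : coprime p p.-1 by rewrite prime_coprime // gtnNdvd; have := prime_gt1 p_pr; lia.
have ord_le (x : 'I_h.+1) : x <= h by rewrite -ltnS.
pose sq (x : 'I_h.+1) : 'I_p := Ordinal (ltn_pmod (x ^ 2) p_gt0).
pose sqN (y : 'I_h.+1) : 'I_p := Ordinal (ltn_pmod (t + p.-1 * y ^ 2) p_gt0).
have sq_inj : injective sq.
  by move=> x y /(congr1 val) /= exy; apply/val_inj/(sqr_mod_inj cp1); rewrite ?mul1n ?ord_le.
have sqN_inj : injective sqN.
  move=> x y /(congr1 val) /= /eqP; rewrite eqn_modDl => /eqP exy.
  by apply/val_inj/(sqr_mod_inj cpN); rewrite ?ord_le.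
have : [set sq x | x in 'I_h.+1] :&: [set sqN y | y in 'I_h.+1] != set0.
  rewrite -card_gt0; have := cardsUI [set sq x | x in 'I_h.+1] [set sqN y | y in 'I_h.+1].
  have := max_card ([set sq x | x in 'I_h.+1] :|: [set sqN y | y in 'I_h.+1]).
  rewrite !card_imset // !card_ord; lia.
case/set0Pn => _ /setIP[/imsetP[x _ ->] /imsetP[y _ /(congr1 val) /= exy]].
exists x, y; rewrite -modnDml exy modnDml -addnA.
have -> : p.-1 * y ^ 2 + y ^ 2 = y ^ 2 * p by rewrite -{2}(mul1n (y ^ 2)) -mulnDl addn1 prednK // mulnC.
by rewrite addnC modnMDl.
Qed.

Local Open Scope ring_scope.

Lemma sum_two_sqrz_mod (T : int) : exists x y : int, (p%:Z %| x ^+ 2 + y ^+ 2 - T)%Z.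
Proof.
have p_gt0 : 0 < p%:Z by rewrite ltz_nat prime_gt0.
have [x [y exy]] := sum_two_sqr_mod `|(T %% p%:Z)%Z|%N.
exists x, y; rewrite -eqz_mod_dvd; apply/eqP.
have -> : x%:Z ^+ 2 + y%:Z ^+ 2 = (x ^ 2 + y ^ 2)%N by rewrite !expr2 -!PoszM -PoszD !mulnn.
by rewrite modz_nat exy -modz_nat gez0_abs ?modz_mod // modz_ge0 // gt_eqF.
Qed.

(* Newton step: if p^(k+1) | c^2 - T, then c + m p^(k+1) works modulo p^(k+2) as soon as
   2 c m = -(c^2 - T) / p^(k+1) mod p. *)
Lemma sqrz_lift (T c0 : int) : ~~ (p%:Z %| c0)%Z -> (p%:Z %| c0 ^+ 2 - T)%Z ->
  forall n, exists c : int, ~~ (p%:Z %| c)%Z /\ (p%:Z ^+ n.+1 %| c ^+ 2 - T)%Z.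
Proof.
move=> pNc0 dvd_c0; elim=> [|k [c [pNc /dvdzP[t et]]]]; first by exists c0; rewrite expr1.
have cp2c : coprimez p%:Z (2 * c).
  rewrite coprimezE abszM prime_coprime // Euclid_dvdM // negb_or -dvdzE pNc andbT.
  by rewrite dvdzE gtnNdvd //; have := prime_gt1 p_pr; lia.
have [[u v] /= euv] := coprimezP _ _ cp2c.
set q := p%:Z ^+ k.+1; set m := - v * t.
exists (c + m * q); split.
  apply: contra pNc => /dvdzP[b eb]; apply/dvdzP; exists (b - m * p%:Z ^+ k).
  by rewrite mulrBl -mulrA -exprSr -eb /q; ring.
apply/dvdzP; exists (t * u + m ^+ 2 * p%:Z ^+ k).
have et' : t = t * (u * p%:Z + v * (2 * c)) by rewrite euv mulr1.
have -> : (c + m * q) ^+ 2 - T = (c ^+ 2 - T) + 2 * c * m * q + m ^+ 2 * q ^+ 2 by ring.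
by rewrite et /m /q {1}et' !exprS; ring.
Qed.

Lemma sum_two_sqrz_unit_modX (T : int) n : ~~ (p%:Z %| T)%Z ->
  exists x y : int, ~~ (p%:Z %| x)%Z /\ (p%:Z ^+ n %| x ^+ 2 + y ^+ 2 - T)%Z.
Proof.
move=> pNT; have [x [y dvd_xy]] := sum_two_sqrz_mod T.
wlog pNx : x y dvd_xy / ~~ (p%:Z %| x)%Z => [wlog_x|].
  have [px|pNx] := boolP (p%:Z %| x)%Z; last exact: wlog_x dvd_xy pNx.
  apply: (wlog_x y x); first by rewrite (addrC (y ^+ 2)).
  apply: contra pNT => py; have -> : T = x * x + y * y - (x ^+ 2 + y ^+ 2 - T) by ring.
  by apply: rpredB => //; apply: rpredD; apply: dvdz_mull.
have /(sqrz_lift pNx)/(_ n)[c [pNc dvd_c]] : (p%:Z %| x ^+ 2 - (T - y ^+ 2))%Z.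
  by rewrite opprB addrA.
exists c, y; split=> //; apply: dvdz_trans (dvdz_exp2l _ (leqnSn n)) _.
by rewrite -addrA -opprB.
Qed.

Lemma sum_three_sqrz_unit_modX (T : int) n : exists x y z : int,
  ~~ (p%:Z %| x)%Z /\ (p%:Z ^+ n %| x ^+ 2 + y ^+ 2 + z ^+ 2 - T)%Z.
Proof.
have [pT|pNT] := boolP (p%:Z %| T)%Z; last first.
  have [x [y [pNx dvd_xy]]] := sum_two_sqrz_unit_modX n pNT.
  by exists x, y, 0; rewrite expr0n addr0.
have pNT1 : ~~ (p%:Z %| T - 1)%Z.
  apply/negP => pT1; have := rpredB pT pT1; rewrite subKr dvdzE dvdn1 /=.
  by apply/negP; rewrite neq_ltn prime_gt1 ?orbT.
have [x [y [pNx dvd_xy]]] := sum_two_sqrz_unit_modX n pNT1.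
by exists x, y, 1; rewrite expr1n; rewrite opprB addrA in dvd_xy.
Qed.

End SumsOfSquaresModPrime.

Local Open Scope ring_scope.

(* If v commutes with a and v ^ 2 = s, then f (a + v) = P + Q v, where (P, Q) is computed
   from the coefficients l of f by this Horner scheme. *)
Definition quad_horner (a s : rat) (l : seq rat) : rat * rat :=
  foldr (fun c PQ => (PQ.1 * a + s * PQ.2 + c, PQ.1 + a * PQ.2)) (0, 0) l.

Lemma qeval_quad_horner f a b c d :
  let PQ := quad_horner a (- (b ^+ 2 + c ^+ 2 + d ^+ 2)) (polyseq f) in
  qeval f (Quat a b c d) = Quat PQ.1 (PQ.2 * b) (PQ.2 * c) (PQ.2 * d).
Proof.
rewrite /qeval /=; elim: (polyseq f) => [|x l /= ->]; first by rewrite /qzero /qconst !mul0r.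
by rewrite /qadd /qmul /qconst /=; congr Quat; ring.
Qed.

Definition half_trace (M : 'M[rat]_2) := (M 0 0 + M 1 1) / 2.
Definition sqr_traceless (M : 'M[rat]_2) := (M 0 0 - half_trace M) ^+ 2 + M 0 1 * M 1 0.

Lemma ord2_ind (P : 'I_2 -> Prop) : P 0 -> P 1 -> forall i, P i.
Proof. by move=> P0 P1 [[|[|//]] lt_i2]; [move: P0 | move: P1]; congr P; apply: val_inj. Qed.

Lemma horner_mx_quad_horner f M :
  let PQ := quad_horner (half_trace M) (sqr_traceless M) (polyseq f) in
  horner_mx M f = PQ.1%:M + PQ.2 *: (M - (half_trace M)%:M).
Proof.
rewrite /= -{1}[f]polyseqK; elim: (polyseq f) => [|c l IH] /=.
  by rewrite rmorph0 scale0r addr0 raddf0.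
rewrite cons_poly_def rmorphD rmorphM /= horner_mx_X horner_mx_C IH.
have lift0 : lift ord0 ord0 = 1 :> 'I_2 by apply: val_inj.
have ord0E : ord0 = 0 :> 'I_2 by apply: val_inj.
apply/matrixP => i j; rewrite !mxE big_ord_recl big_ord1 !mxE lift0 ord0E /sqr_traceless /half_trace.
by elim/ord2_ind: i; elim/ord2_ind: j => /=; field.
Qed.

Definition qnorm (q : quat) := qa q ^+ 2 + qb q ^+ 2 + qc q ^+ 2 + qd q ^+ 2.

Lemma qnormM x y : qnorm (qmul x y) = qnorm x * qnorm y.
Proof. by case: x => a b c d; case: y => a' b' c' d'; rewrite /qnorm /=; ring. Qed.

Lemma qnorm_eq0 q : qnorm q = 0 -> q = qzero.
Proof.
case: q => a b c d; rewrite /qnorm /= => n0.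
have [-> -> -> ->] : [/\ a = 0, b = 0, c = 0 & d = 0] by split; nra.
by [].
Qed.

Section Localization.
Variable p : nat.
Hypothesis p_pr : prime p.
Hypothesis p_odd : odd p.

Lemma prime_ndvdzM (a b : int) :
  ~~ (p%:Z %| a)%Z -> ~~ (p%:Z %| b)%Z -> ~~ (p%:Z %| a * b)%Z.
Proof. by rewrite !dvdzE abszM Euclid_dvdM // => /negPf-> /negPf->. Qed.

Lemma intr_ndvdz_neq0 (d : int) : ~~ (p%:Z %| d)%Z -> d%:~R != 0 :> rat.
Proof. by apply: contra; rewrite intr_eq0 => /eqP->; rewrite dvdz0. Qed.

Lemma inZloc_frac (n d : int) : ~~ (p%:Z %| d)%Z -> inZloc p (n%:~R / d%:~R).
Proof.
rewrite /inZloc; case: divqP => [_|k fr _]; first by rewrite dvdz0.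
exact/contra/dvdz_mull.
Qed.

Lemma inZloc_int (n : int) : inZloc p n%:~R.
Proof.
have := @inZloc_frac n 1; rewrite divr1; apply.
by rewrite dvdzE dvdn1 neq_ltn prime_gt1 ?orbT.
Qed.

Lemma inZloc_nat (n : nat) : inZloc p n%:R.
Proof. exact: (inZloc_int n). Qed.

Lemma inZloc0 : inZloc p 0. Proof. exact: (inZloc_int 0). Qed.
Lemma inZloc1 : inZloc p 1. Proof. exact: (inZloc_int 1). Qed.

Lemma inZlocD x y : inZloc p x -> inZloc p y -> inZloc p (x + y).
Proof.
move=> px py; rewrite -[x]divq_num_den -[y]divq_num_den.
have := intr_ndvdz_neq0 px; have := intr_ndvdz_neq0 py => dy0 dx0.
have -> : (numq x)%:~R / (denq x)%:~R + (numq y)%:~R / (denq y)%:~R =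
  (numq x * denq y + numq y * denq x)%:~R / (denq x * denq y)%:~R :> rat.
  by rewrite !rmorphD !rmorphM /=; field; apply/andP.
exact/inZloc_frac/prime_ndvdzM.
Qed.

Lemma inZlocM x y : inZloc p x -> inZloc p y -> inZloc p (x * y).
Proof.
move=> px py; rewrite -[x]divq_num_den -[y]divq_num_den.
have := intr_ndvdz_neq0 px; have := intr_ndvdz_neq0 py => dy0 dx0.
have -> : (numq x)%:~R / (denq x)%:~R * ((numq y)%:~R / (denq y)%:~R) =
  (numq x * numq y)%:~R / (denq x * denq y)%:~R :> rat.
  by rewrite !rmorphM /=; field; apply/andP.
exact/inZloc_frac/prime_ndvdzM.
Qed.

Lemma inZlocN x : inZloc p x -> inZloc p (- x).
Proof. by rewrite -mulN1r; apply/inZlocM/(inZloc_int (-1)). Qed.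

Lemma inZlocB x y : inZloc p x -> inZloc p y -> inZloc p (x - y).
Proof. by move=> px py; apply/inZlocD/inZlocN. Qed.

Lemma inZlocV_int (d : int) : ~~ (p%:Z %| d)%Z -> inZloc p (d%:~R)^-1.
Proof. by rewrite -div1r; apply: (inZloc_frac 1). Qed.

Lemma inZloc_half : inZloc p 2^-1.
Proof.
by rewrite -[2]/((2%:Z)%:~R : rat) inZlocV_int // dvdzE gtnNdvd //; have := prime_gt1 p_pr; lia.
Qed.

Lemma inZlocVN x : ~~ inZloc p x -> inZloc p x^-1.
Proof.
move/negbNE => p_den; rewrite -[x]divq_num_den invf_div inZloc_frac //.
apply/negP => p_num; have /eqP gcd1 := coprime_num_den x.
have : (p %| gcdn `|numq x| `|denq x|)%N by rewrite dvdn_gcd; apply/andP.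
by rewrite gcd1 dvdn1 => /eqP p1; move: p_pr; rewrite p1.
Qed.

Definition Zloc_dvd (g b : rat) := exists2 r, inZloc p r & b = g * r.

Lemma Zloc_dvd_refl g : Zloc_dvd g g.
Proof. by exists 1; rewrite ?mulr1 ?inZloc1. Qed.

Lemma Zloc_dvd_trans h g b : Zloc_dvd h g -> Zloc_dvd g b -> Zloc_dvd h b.
Proof. by move=> [r1 pr1 ->] [r2 pr2 ->]; exists (r1 * r2); [apply: inZlocM | rewrite mulrA]. Qed.

Lemma Zloc_dvd_total x y : Zloc_dvd x y \/ Zloc_dvd y x.
Proof.
have [->|x0] := eqVneq x 0; first by right; exists 0; rewrite ?mulr0 ?inZloc0.
have [pyx|pNyx] := boolP (inZloc p (y / x)); first by left; exists (y / x); rewrite // mulrC divfK.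
have y0 : y != 0 by apply: contraNneq pNyx => ->; rewrite mul0r inZloc0.
by right; exists (x / y); [rewrite -invf_div inZlocVN | rewrite mulrC divfK].
Qed.

Lemma Zloc_dvd_min (l : seq rat) : l != [::] ->
  exists2 g, g \in l & forall b, b \in l -> Zloc_dvd g b.
Proof.
elim: l => // x [_ _|y l IH _].
  by exists x; rewrite ?mem_head // => b; rewrite inE => /eqP->; apply: Zloc_dvd_refl.
have [g g_in g_min] := IH isT.
have [xg|gx] := Zloc_dvd_total x g.
  exists x; rewrite ?mem_head // => b; rewrite inE => /predU1P[->|/g_min]; first exact: Zloc_dvd_refl.
  exact: Zloc_dvd_trans.
by exists g; [by rewrite in_cons g_in orbT | move=> b; rewrite inE => /predU1P[->|/g_min]].
Qed.

Lemma Zloc_pexp_scale (l : seq rat) :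
  exists n, forall c, c \in l -> inZloc p ((p ^ n)%:R * c).
Proof.
elim: l => [|c l [n pn_l]]; first by exists 0%N.
have den_gt0 : (0 < `|denq c|)%N by rewrite absz_gt0 denq_neq0.
have [m cpm em] := pfactor_coprime p_pr den_gt0; set k := logn p _ in em.
have pk_c : inZloc p ((p ^ k)%:R * c).
  have pk0 : (p ^ k)%:R != 0 :> rat by rewrite pnatr_eq0 -lt0n expn_gt0 prime_gt0.
  have m0 : m%:R != 0 :> rat.
    by rewrite pnatr_eq0; apply: contraTneq cpm => ->; rewrite /coprime gcdn0 neq_ltn prime_gt1 ?orbT.
  rewrite -[c]divq_num_den -[denq c]absz_denq em -[X in _ / X]/((m * p ^ k)%:R : rat).
  rewrite natrM (_ : _ * (_ / _) = (numq c)%:~R / (m%:Z)%:~R); last by field; apply/andP.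
  by rewrite inZloc_frac // dvdzE -prime_coprime.
exists (k + n)%N => b; rewrite inE expnD natrM => /predU1P[->|/pn_l pn_b].
  by rewrite mulrAC; apply: inZlocM; rewrite ?inZloc_nat.
by rewrite -mulrA; apply: inZlocM; rewrite ?inZloc_nat.
Qed.

Lemma sum_three_sqr_Zloc s n : inZloc p s -> exists u1 u2 u3 t : rat,
  [/\ inZloc p u1, inZloc p u2, inZloc p u3 & inZloc p t] /\
  [/\ u1 != 0, inZloc p u1^-1 & s + u1 ^+ 2 + u2 ^+ 2 + u3 ^+ 2 = (p ^ n)%:R * t].
Proof.
move=> ps; set d := denq s.
have [x [y [z [pNx /dvdzP[w ew]]]]] := sum_three_sqrz_unit_modX p_pr p_odd (- numq s * d) n.
have d0 := intr_ndvdz_neq0 ps.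
exists (x%:~R / d%:~R), (y%:~R / d%:~R), (z%:~R / d%:~R), (w%:~R / (d ^+ 2)%:~R).
split; first by split; apply: inZloc_frac => //; rewrite exprS prime_ndvdzM // expr1.
split; first by rewrite mulf_neq0 ?invr_eq0 // intr_ndvdz_neq0.
  by rewrite invf_div inZloc_frac.
have /(congr1 (fun m : int => m%:~R : rat)) : x ^+ 2 + y ^+ 2 + z ^+ 2 = - numq s * d + w * p%:Z ^+ n.
  by rewrite -ew; ring.
rewrite !rmorphD !rmorphM !rmorphXn /= rmorphN /= => e.
rewrite -[s in LHS]divq_num_den -/d.
transitivity (((numq s)%:~R * d%:~R + (x%:~R ^+ 2 + y%:~R ^+ 2 + z%:~R ^+ 2)) / d%:~R ^+ 2 : rat).
  by field.
by rewrite e -[(p%:Z)%:~R]/(p%:R : rat); field.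
Qed.

Lemma quad_horner_Zloc a s dd l : inZloc p a -> inZloc p s ->
  (forall c, c \in l -> inZloc p (dd * c)) ->
  inZloc p (dd * (quad_horner a s l).1) /\ inZloc p (dd * (quad_horner a s l).2).
Proof.
move=> pa ps; elim: l => [|c l IH] pl /=; first by rewrite mulr0 inZloc0.
have pl' x : x \in l -> inZloc p (dd * x) by move=> l_x; apply: pl; rewrite in_cons l_x orbT.
have [pP pQ] := IH pl'.
have pc := pl c (mem_head c l).
split; last by rewrite mulrDr mulrCA; apply: inZlocD => //; apply: inZlocM.
rewrite !mulrDr [dd * (_ * a)]mulrA [dd * (s * _)]mulrCA; apply: inZlocD => //.
by apply: inZlocD; apply: inZlocM.
Qed.

Lemma quad_horner_lipschitz a s s' dd l :
  inZloc p a -> inZloc p s -> inZloc p s' -> (forall c, c \in l -> inZloc p (dd * c)) ->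
  (exists2 y, inZloc p y & dd * ((quad_horner a s l).1 - (quad_horner a s' l).1) = (s - s') * y) /\
  (exists2 y, inZloc p y & dd * ((quad_horner a s l).2 - (quad_horner a s' l).2) = (s - s') * y).
Proof.
move=> pa ps ps'; elim: l => [|c l IH] pl /=.
  by split; exists 0; rewrite ?subrr ?mulr0 ?inZloc0.
have pl' x : x \in l -> inZloc p (dd * x) by move=> l_x; apply: pl; rewrite in_cons l_x orbT.
have [[y1 py1 e1] [y2 py2 e2]] := IH pl'.
have [_ pQ'] := quad_horner_Zloc pa ps' pl'.
set P := (quad_horner a s l).1 in e1 *; set Q := (quad_horner a s l).2 in e2 *.
set P' := (quad_horner a s' l).1 in e1 *; set Q' := (quad_horner a s' l).2 in e2 pQ' *.
split.
  exists (a * y1 + s * y2 + dd * Q').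
    by apply: inZlocD => //; apply: inZlocD; apply: inZlocM.
  transitivity (a * (dd * (P - P')) + s * (dd * (Q - Q')) + (s - s') * (dd * Q')); first by ring.
  by rewrite e1 e2; ring.
exists (y1 + a * y2); first by apply: inZlocD => //; apply: inZlocM.
transitivity (dd * (P - P') + a * (dd * (Q - Q'))); first by ring.
by rewrite e1 e2; ring.
Qed.

Definition quad_integral (f : {poly rat}) (a g s : rat) :=
  let PQ := quad_horner a (g ^+ 2 * s) (polyseq f) in inZloc p PQ.1 /\ inZloc p (PQ.2 * g).

Definition IntQ_quad (f : {poly rat}) :=
  forall a g s, inZloc p a -> inZloc p g -> inZloc p s -> quad_integral f a g s.

Lemma quad_integral_congr f n a g s s' t :
  (forall c, c \in polyseq f -> inZloc p ((p ^ n)%:R * c)) ->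
  inZloc p a -> inZloc p g -> inZloc p s -> inZloc p s' -> inZloc p t ->
  s = s' + (p ^ n)%:R * t -> quad_integral f a g s' -> quad_integral f a g s.
Proof.
move=> pn_f pa pg ps ps' pt es.
have pg2 : inZloc p (g ^+ 2) by rewrite expr2; apply: inZlocM.
have [[y1 py1 e1] [y2 py2 e2]] :=
  quad_horner_lipschitz (l := polyseq f) pa (inZlocM pg2 ps) (inZlocM pg2 ps') pn_f.
have pn0 : (p ^ n)%:R != 0 :> rat by rewrite pnatr_eq0 -lt0n expn_gt0 prime_gt0.
have ediff : g ^+ 2 * s - g ^+ 2 * s' = (p ^ n)%:R * (g ^+ 2 * t) by rewrite es; ring.
rewrite ediff -mulrA in e1; rewrite ediff -mulrA in e2; move: (mulfI pn0 e1) (mulfI pn0 e2).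
rewrite /quad_integral /= => /eqP; rewrite subr_eq => /eqP-> /eqP; rewrite subr_eq => /eqP->.
have pg2t : inZloc p (g ^+ 2 * t) by apply: inZlocM.
move=> [pP' pQ'g]; split; first by apply: inZlocD => //; apply: inZlocM.
by rewrite mulrDl; apply: inZlocD => //; apply: inZlocM => //; apply: inZlocM.
Qed.

Lemma IntQ_A_quadE f : IntQ_A p f <-> IntQ_quad f.
Proof.
have psqr x : inZloc p x -> inZloc p (x ^+ 2) by rewrite expr2 => px; apply: inZlocM.
split=> [intA a g s pa pg ps | intq [a b c d] /and4P[pa pb pc pd]].
  have [n pn_f] := Zloc_pexp_scale (polyseq f).
  have [u1 [u2 [u3 [t [[pu1 pu2 pu3 pt] [u10 pu1V es]]]]]] := sum_three_sqr_Zloc n ps.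
  set s' := - (u1 ^+ 2 + u2 ^+ 2 + u3 ^+ 2).
  have ps' : inZloc p s' by apply/inZlocN/inZlocD; [apply: inZlocD|]; apply: psqr.
  apply: (quad_integral_congr pn_f pa pg ps ps' pt); first by rewrite -es /s'; ring.
  have pq : inA p (Quat a (g * u1) (g * u2) (g * u3)) by apply/and4P; split => //=; apply: inZlocM.
  have := intA _ pq; rewrite qeval_quad_horner /inA /=.
  have -> : - ((g * u1) ^+ 2 + (g * u2) ^+ 2 + (g * u3) ^+ 2) = g ^+ 2 * s' by rewrite /s'; ring.
  case/and4P => pP pQgu1 _ _; split => //.
  by rewrite -[_ * g](mulfK u10); apply: inZlocM; rewrite // -mulrA.
have [g g_in g_min] := Zloc_dvd_min (l := [:: b; c; d]) isT.
have pg : inZloc p g by move: g_in; rewrite !inE => /or3P[] /eqP->.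
have [rb prb eb] : Zloc_dvd g b by apply: g_min; rewrite !inE eqxx.
have [rc prc ec] : Zloc_dvd g c by apply: g_min; rewrite !inE eqxx orbT.
have [rd prd ed] : Zloc_dvd g d by apply: g_min; rewrite !inE eqxx !orbT.
have ps : inZloc p (- (rb ^+ 2 + rc ^+ 2 + rd ^+ 2)).
  by apply/inZlocN/inZlocD; [apply: inZlocD|]; apply: psqr.
have [pP pQg] := intq a g _ pa pg ps.
rewrite /inA qeval_quad_horner /=.
have -> : - (b ^+ 2 + c ^+ 2 + d ^+ 2) = g ^+ 2 * - (rb ^+ 2 + rc ^+ 2 + rd ^+ 2).
  by rewrite eb ec ed; ring.
by rewrite {1}eb {1}ec {1}ed !mulrA; apply/and4P; split => //; apply: inZlocM.
Qed.

Lemma IntQ_M2D_quadE f : IntQ_M2D p f <-> IntQ_quad f.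
Proof.
split=> [intM a g s pa pg ps | intq M /forallP pM].
  pose M : 'M[rat]_2 := \matrix_(i, j) if i == j then a else if i == 0 then g else g * s.
  have pM : inM2D p M.
    apply/forallP => i; apply/forallP => j; rewrite mxE.
    by case: eqP => _ //; case: eqP => _ //; apply: inZlocM.
  have ha : half_trace M = a by rewrite /half_trace !mxE /=; field.
  have hs : sqr_traceless M = g ^+ 2 * s by rewrite /sqr_traceless ha !mxE /=; ring.
  have := intM M pM; rewrite horner_mx_quad_horner ha hs.
  move=> /forallP/(_ 0)/forallP pf; split; [move: (pf 0) | move: (pf 1)]; rewrite !mxE /=.
    by rewrite mulr1n subrr mulr0 addr0.
  by rewrite !mulr0n add0r subr0.
have pMij i j : inZloc p (M i j) by move/forallP: (pM i).
have pa : inZloc p (half_trace M).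
  by apply: inZlocM; [apply: inZlocD | exact: inZloc_half].
set a := half_trace M in pa *; set x := M 0 0 - a.
have [g g_in g_min] := Zloc_dvd_min (l := [:: x; M 0 1; M 1 0]) isT.
have pg : inZloc p g by move: g_in; rewrite !inE => /or3P[] /eqP->; rewrite ?inZlocB.
have [rx prx ex] : Zloc_dvd g x by apply: g_min; rewrite !inE eqxx.
have [ry pry ey] : Zloc_dvd g (M 0 1) by apply: g_min; rewrite !inE eqxx orbT.
have [rz prz ez] : Zloc_dvd g (M 1 0) by apply: g_min; rewrite !inE eqxx !orbT.
have ps : inZloc p (rx ^+ 2 + ry * rz) by rewrite expr2; apply: inZlocD; apply: inZlocM.
have [pP pQg] := intq a g _ pa pg ps.
have hs : sqr_traceless M = g ^+ 2 * (rx ^+ 2 + ry * rz).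
  by rewrite /sqr_traceless -/a -/x ex ey ez; ring.
have e00 : M 0 0 - a = g * rx := ex.
have e11 : M 1 1 - a = - (g * rx) by rewrite -ex /x /a /half_trace; field.
rewrite horner_mx_quad_horner -/a hs; move: pP pQg; set P := _.1; set Q := _.2 => pP pQg.
apply/forallP => i; apply/forallP => j; rewrite !mxE.
elim/ord2_ind: i; elim/ord2_ind: j => /=; rewrite ?mulr1n ?mulr0n ?add0r ?subr0.
all: rewrite ?e00 ?e11 ?ey ?ez ?mulrN mulrA; try apply: inZlocD => //.
all: try apply: inZlocN; exact: inZlocM.
Qed.

Lemma inA_qmul x y : inA p x -> inA p y -> inA p (qmul x y).
Proof.
case: x y => [a b c d] [a' b' c' d'] /and4P[pa pb pc pd] /and4P[pa' pb' pc' pd'].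
apply/and4P; rewrite /qmul /=.
by split; repeat first [apply: inZlocD | apply: inZlocN | apply: inZlocM].
Qed.

(* An isomorphism would pull the idempotents e11, e22 back to quaternions with product 0,
   impossible as the quaternion norm is multiplicative and anisotropic. *)
Lemma no_A_M2D_ring_iso : ~ exists phi, A_M2D_ring_iso p phi.
Proof.
move=> [phi [_ [phi_inj [phi_surj [phiD [phiM _]]]]]].
have A0 : inA p qzero by apply/and4P; split; apply: inZloc0.
have phi0 : phi qzero = 0 by apply: (addrI (phi qzero)); rewrite addr0 -phiD.
have delta_D i j : inM2D p (delta_mx i j).
  by apply/forallP => k; apply/forallP => l; rewrite mxE; case: (_ && _); rewrite ?inZloc1 ?inZloc0.
have [x Ax ex] := phi_surj _ (delta_D 0 0).
have [y Ay ey] := phi_surj _ (delta_D 1 1).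
have xy0 : qmul x y = qzero.
  by apply: phi_inj; rewrite ?inA_qmul // phiM // ex ey phi0 -mulmxE mul_delta_mx_cond.
have /eqP : qnorm x * qnorm y = 0 by rewrite -qnormM xy0 /qnorm /=; ring.
rewrite mulf_eq0 => /orP[] /eqP /qnorm_eq0 e.
  by move: ex; rewrite e phi0 => /matrixP/(_ 0 0); rewrite !mxE.
by move: ey; rewrite e phi0 => /matrixP/(_ 1 1); rewrite !mxE.
Qed.

End Localization.

Theorem mainTheorem13 (p : nat) (hp : prime p) (hodd : odd p) :
  (forall f : {poly rat}, IntQ_A p f <-> IntQ_M2D p f) /\
  ~ (exists phi : quat -> 'M[rat]_2, A_M2D_ring_iso p phi).
Proof.
split; last exact: no_A_M2D_ring_iso.
by move=> f; rewrite (IntQ_A_quadE hp hodd) (IntQ_M2D_quadE hp hodd).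
Qed.
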